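(* Let $g:[0,1]\to\mathbb{R}$ be strictly monotone in a neighborhood of $x_0\in[0,1]$, let $d\in(0,1)$, $a\ne0$, and $x_m=x_0+ad^m$, with $x_m\in[0,1]$ for all large $m$. Suppose that $\frac{g(x_m)-g(x_0)}{x_m-x_0}\to L$ as $m\to\infty$, where $L\in\{0,+\infty,-\infty\}$. If $a<0$, then the left derivative of $g$ at $x_0$ exists and equals $L$; if $a>0$, then the right derivative of $g$ at $x_0$ exists and equals $L$. (One-sided monotonicity on the relevant side of $x_0$ suffices for the corresponding one-sided conclusion.) *)

From Stdlib Require Import Reals.
From Coquelicot Require Import Coquelicot.
Open Scope R_scope.

Definition strictly_monotone_on (g : R -> R) (P : R -> Prop) : Prop :=
  (forall x y, P x -> P y -> x < y -> g x < g y) \/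
  (forall x y, P x -> P y -> x < y -> g y < g x).

Definition has_left_derivative (g : R -> R) (x0 : R) (L : Rbar) : Prop :=
  filterlim (fun x => (g x - g x0) / (x - x0)) (at_left x0) (Rbar_locally L).

Definition has_right_derivative (g : R -> R) (x0 : R) (L : Rbar) : Prop :=
  filterlim (fun x => (g x - g x0) / (x - x0)) (at_right x0) (Rbar_locally L).

(** The difference quotients of a strictly monotone [g] along the geometric
    sequence of increments [h_m = |a| d^m] control all nearby quotients: every
    [h] lies in some [(d h_m, h_m]], and monotonicity of [g] traps the quotient
    at [h] between [d] times the quotient at [h_(m+1)] and [1/d] times the
    quotient at [h_m].  A bounded rescaling does not affect convergence to
    [0] or [±∞], so the one-sided derivative along all [h] equals the limit
    along the sequence. *)

From Stdlib Require Import Reals Lra Lia.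
From Coquelicot Require Import Coquelicot.
Open Scope R_scope.

Definition between (u x v : R) : Prop := u <= x <= v \/ v <= x <= u.

Lemma strictly_monotone_on_opp (g : R -> R) (P : R -> Prop) :
  strictly_monotone_on g P -> strictly_monotone_on (fun x => - g x) P.
Proof.
  intros [Hg | Hg]; [right | left]; intros x y Px Py Hxy;
    specialize (Hg x y Px Py Hxy); lra.
Qed.

Lemma strictly_monotone_on_comp (g phi : R -> R) (P Q : R -> Prop) :
  (forall h, Q h -> P (phi h)) ->
  strictly_monotone_on phi Q -> strictly_monotone_on g P ->
  strictly_monotone_on (fun h => g (phi h)) Q.
Proof.
  intros HQP [Hphi | Hphi] [Hg | Hg]; [left | right | right | left];
    intros x y Qx Qy Hxy; specialize (Hphi x y Qx Qy Hxy); apply Hg; auto.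
Qed.

Lemma eventually_geometric_lt (c d eps : R) :
  0 < d < 1 -> 0 < eps -> eventually (fun n => c * d ^ n < eps).
Proof.
  intros Hd Heps.
  assert (Hgeom : is_lim_seq (fun n => c * d ^ n) (Rbar_mult c 0)).
  { apply is_lim_seq_scal_l, is_lim_seq_geom. rewrite Rabs_pos_eq; lra. }
  simpl in Hgeom. rewrite Rmult_0_r in Hgeom.
  apply is_lim_seq_spec in Hgeom.
  destruct (Hgeom (mkposreal eps Heps)) as [N HN].
  exists N. intros n Hn. specialize (HN n Hn). simpl in HN.
  apply Rabs_def2 in HN. lra.
Qed.

Lemma geometric_bracket (b d h : R) (M : nat) :
  0 < d < 1 -> 0 < h <= b * d ^ M ->
  exists m, (M <= m)%nat /\ b * d ^ S m < h <= b * d ^ m.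
Proof.
  intros Hd Hh.
  assert (Hstep : forall k, b * d ^ (M + k) < h ->
    exists m, (M <= m)%nat /\ b * d ^ S m < h <= b * d ^ m).
  { induction k as [|k IH]; intros Hk.
    - rewrite Nat.add_0_r in Hk. lra.
    - destruct (Rlt_le_dec (b * d ^ (M + k)) h) as [Hlt | Hle].
      + exact (IH Hlt).
      + exists (M + k)%nat. rewrite <- Nat.add_succ_r. split; [lia | lra]. }
  destruct (eventually_geometric_lt b d h Hd (proj1 Hh)) as [K HK].
  apply (Hstep K), HK. lia.
Qed.

Lemma Rdiv_le_compat_nonneg (p q h k : R) :
  0 <= p <= q -> 0 < h <= k -> p / k <= q / h.
Proof.
  intros Hpq Hhk. unfold Rdiv.
  apply Rle_trans with (p * / h).
  - apply Rmult_le_compat_l; [lra | apply Rinv_le_contravar; lra].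
  - apply Rmult_le_compat_r; [left; apply Rinv_0_lt_compat |]; lra.
Qed.

Lemma difference_quotient_between_incr (F : R -> R) (H c k h : R) :
  0 < c < 1 ->
  (forall s t, 0 <= s <= H -> 0 <= t <= H -> s < t -> F s < F t) ->
  0 < k <= H -> c * k < h <= k ->
  c * ((F (c * k) - F 0) / (c * k)) <= (F h - F 0) / h
    <= (F k - F 0) / k / c.
Proof.
  intros Hc HF Hk Hh.
  assert (Hck : 0 < c * k) by nra.
  assert (HFck : F 0 < F (c * k)) by (apply HF; nra).
  assert (HFh : F (c * k) < F h) by (apply HF; nra).
  assert (HFk : F h <= F k).
  { destruct (Req_dec h k) as [-> | Hne]; [lra |]. left; apply HF; lra. }
  replace (c * ((F (c * k) - F 0) / (c * k))) with ((F (c * k) - F 0) / k)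
    by (field; lra).
  replace ((F k - F 0) / k / c) with ((F k - F 0) / (c * k)) by (field; lra).
  split; apply Rdiv_le_compat_nonneg; lra.
Qed.

Lemma difference_quotient_between (F : R -> R) (H c k h : R) :
  0 < c < 1 -> strictly_monotone_on F (fun t => 0 <= t <= H) ->
  0 < k <= H -> c * k < h <= k ->
  between (c * ((F (c * k) - F 0) / (c * k))) ((F h - F 0) / h)
          ((F k - F 0) / k / c).
Proof.
  intros Hc [Hinc | Hdec] Hk Hh.
  - left. exact (difference_quotient_between_incr F H c k h Hc Hinc Hk Hh).
  - right.
    assert (Hinc : forall s t, 0 <= s <= H -> 0 <= t <= H -> s < t -> - F s < - F t)
      by (intros; apply Ropp_lt_contravar; auto).
    pose proof (difference_quotient_between_incr _ H c k h Hc Hinc Hk Hh) as Hopp.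
    assert (Hneg : forall t u, (- F t - - F 0) / u = - ((F t - F 0) / u))
      by (intros; unfold Rdiv; ring).
    cbv beta in Hopp. rewrite !Hneg in Hopp. lra.
Qed.

(* The only place where [L] ∈ {0, ±∞} is needed: these are the limits whose
   neighbourhood bases absorb rescalings by factors in [[c, 1/c]]. *)
Lemma Rbar_locally_between_scaled (L : Rbar) (c : R) :
  (L = Finite 0 \/ L = p_infty \/ L = m_infty) -> 0 < c <= 1 ->
  forall P, Rbar_locally L P ->
  exists U, Rbar_locally L U /\
    forall u v x, U u -> U v -> between (c * u) x (v / c) -> P x.
Proof.
  intros HL Hc P HP.
  assert (Hvc : forall v, v / c * c = v) by (intros v; field; lra).
  assert (Hbig : forall E y, 0 <= E -> E / c < y -> E < c * y /\ E < y / c).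
  { intros E y HE Hy. pose proof (Hvc E). pose proof (Hvc y).
    set (w := E / c) in *. set (z := y / c) in *.
    assert (0 <= w) by nra. assert (0 <= z) by nra. split; nra. }
  destruct HL as [-> | [-> | ->]]; simpl in HP; destruct HP as [eps HP].
  - assert (Hec : 0 < eps * c) by (pose proof (cond_pos eps); nra).
    exists (fun y => Rabs y < eps * c). split.
    + exists (mkposreal _ Hec). intros y Hy. simpl.
      change (Rabs (y - 0) < eps * c) in Hy. rewrite Rminus_0_r in Hy. exact Hy.
    + intros u v x Hu Hv Hx. apply HP. change (Rabs (x - 0) < eps).
      rewrite Rminus_0_r. pose proof (cond_pos eps).
      apply Rabs_def2 in Hu. apply Rabs_def2 in Hv.
      assert (Hw : - eps < v / c < eps).
      { pose proof (Hvc v). split; apply (Rmult_lt_reg_r c); nra. }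
      apply Rabs_def1; destruct Hx; nra.
  - exists (fun y => Rabs eps / c < y). split.
    + exists (Rabs eps / c). auto.
    + intros u v x Hu Hv Hx. apply HP. pose proof (Rle_abs eps).
      destruct (Hbig _ u (Rabs_pos eps) Hu), (Hbig _ v (Rabs_pos eps) Hv). destruct Hx; lra.
  - exists (fun y => - y > Rabs eps / c). split.
    + exists (- (Rabs eps / c)). intros y Hy. lra.
    + intros u v x Hu Hv Hx. apply HP. pose proof (Rle_abs (- eps)) as Heps.
      rewrite Rabs_Ropp in Heps.
      destruct (Hbig _ (- u) (Rabs_pos eps) Hu), (Hbig _ (- v) (Rabs_pos eps) Hv).
      unfold Rdiv in *. destruct Hx; nra.
Qed.

Lemma difference_quotient_limit_at_right_0 (F : R -> R) (b d H : R) (L : Rbar) :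
  0 < b -> 0 < d < 1 -> 0 < H ->
  strictly_monotone_on F (fun t => 0 <= t <= H) ->
  (L = Finite 0 \/ L = p_infty \/ L = m_infty) ->
  is_lim_seq (fun m => (F (b * d ^ m) - F 0) / (b * d ^ m)) L ->
  filterlim (fun h => (F h - F 0) / h) (at_right 0) (Rbar_locally L).
Proof.
  intros Hb Hd HH HF HL Hlim P HP.
  set (Q := fun m => (F (b * d ^ m) - F 0) / (b * d ^ m)) in Hlim.
  destruct (Rbar_locally_between_scaled L d HL ltac:(lra) P HP)
    as [U [HU HUP]].
  assert (HQU : eventually (fun n => U (Q n))) by exact (Hlim U HU).
  destruct (filter_and _ _ HQU (eventually_geometric_lt b d H Hd HH)) as [M HM].
  assert (HbM : 0 < b * d ^ M) by (apply Rmult_lt_0_compat; [| apply pow_lt]; lra).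
  exists (mkposreal _ HbM). intros h Hball Hh. change (Rabs (h - 0) < b * d ^ M) in Hball.
  rewrite Rminus_0_r, Rabs_pos_eq in Hball by lra.
  destruct (geometric_bracket b d h M Hd ltac:(lra)) as [m [HMm Hm]].
  destruct (HM m HMm) as [HUm HmH]. destruct (HM (S m) ltac:(lia)) as [HUSm _].
  assert (Hpos : 0 < b * d ^ m) by (apply Rmult_lt_0_compat; [| apply pow_lt]; lra).
  assert (Hscale : b * d ^ S m = d * (b * d ^ m)) by (simpl; ring).
  apply (HUP (Q (S m)) (Q m)); [exact HUSm | exact HUm |].
  unfold Q. rewrite Hscale in *.
  apply (difference_quotient_between F H); [lra | exact HF | lra | lra].
Qed.

Lemma filterlim_shift_at_right (x0 : R) :
  filterlim (fun x => x - x0) (at_right x0) (at_right 0).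
Proof.
  intros P [eps HP]. exists eps. intros x Hx Hgt. apply HP; [| lra].
  change (Rabs (x - x0 - 0) < eps). rewrite Rminus_0_r. exact Hx.
Qed.

Lemma filterlim_reflect_at_left (x0 : R) :
  filterlim (fun x => x0 - x) (at_left x0) (at_right 0).
Proof.
  intros P [eps HP]. exists eps. intros x Hx Hlt. apply HP; [| lra].
  change (Rabs (x0 - x - 0) < eps). rewrite Rminus_0_r, <- Rabs_Ropp.
  replace (- (x0 - x)) with (x - x0) by ring. exact Hx.
Qed.

Lemma difference_quotient_reflect (g : R -> R) (x0 h : R) :
  (- g (x0 - h) - - g (x0 - 0)) / h = (g (x0 - h) - g x0) / (x0 - h - x0).
Proof.
  rewrite Rminus_0_r. replace (x0 - h - x0) with (- h) by ring.
  unfold Rdiv. rewrite Rinv_opp. ring.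
Qed.

Lemma has_left_derivative_of_geometric (g : R -> R) (x0 d a : R) (L : Rbar) :
  x0 <= 1 -> 0 < d < 1 -> a < 0 ->
  eventually (fun m => 0 <= x0 + a * d ^ m) ->
  (L = Finite 0 \/ L = p_infty \/ L = m_infty) ->
  is_lim_seq (fun m => (g (x0 + a * d ^ m) - g x0) / ((x0 + a * d ^ m) - x0)) L ->
  (exists delta, 0 < delta /\
     strictly_monotone_on g (fun x => 0 <= x <= 1 /\ x0 - delta < x <= x0)) ->
  has_left_derivative g x0 L.
Proof.
  intros Hx0 Hd Hneg Hseq HL Hlim [delta [Hdel Hmon]].
  destruct (filter_and _ _ Hseq (eventually_geometric_lt (- a) d delta Hd Hdel))
    as [M HM].
  destruct (HM M (le_n M)) as [HxM HaM].
  set (F := fun h => - g (x0 - h)).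
  assert (HF : strictly_monotone_on F (fun h => 0 <= h <= - a * d ^ M)).
  { apply (strictly_monotone_on_opp (fun h => g (x0 - h))).
    eapply strictly_monotone_on_comp; [| | exact Hmon].
    - intros h Hh. lra.
    - right. intros. lra. }
  assert (HlimF : is_lim_seq (fun m => (F (- a * d ^ m) - F 0) / (- a * d ^ m)) L).
  { eapply is_lim_seq_ext; [| exact Hlim]. intros n. symmetry. unfold F.
    rewrite difference_quotient_reflect.
    replace (x0 - - a * d ^ n) with (x0 + a * d ^ n) by ring. reflexivity. }
  assert (HdM : 0 < d ^ M) by (apply pow_lt; lra).
  pose proof (difference_quotient_limit_at_right_0 F (- a) d (- a * d ^ M) L
    ltac:(lra) Hd ltac:(nra) HF HL HlimF) as HFlim.
  eapply filterlim_ext;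
    [| eapply filterlim_comp; [apply filterlim_reflect_at_left | exact HFlim]].
  intros x. simpl. unfold F. rewrite difference_quotient_reflect.
  replace (x0 - (x0 - x)) with x by ring. reflexivity.
Qed.

Lemma has_right_derivative_of_geometric (g : R -> R) (x0 d a : R) (L : Rbar) :
  0 <= x0 -> 0 < d < 1 -> 0 < a ->
  eventually (fun m => x0 + a * d ^ m <= 1) ->
  (L = Finite 0 \/ L = p_infty \/ L = m_infty) ->
  is_lim_seq (fun m => (g (x0 + a * d ^ m) - g x0) / ((x0 + a * d ^ m) - x0)) L ->
  (exists delta, 0 < delta /\
     strictly_monotone_on g (fun x => 0 <= x <= 1 /\ x0 <= x < x0 + delta)) ->
  has_right_derivative g x0 L.
Proof.
  intros Hx0 Hd Hpos Hseq HL Hlim [delta [Hdel Hmon]].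
  destruct (filter_and _ _ Hseq (eventually_geometric_lt a d delta Hd Hdel))
    as [M HM].
  destruct (HM M (le_n M)) as [HxM HaM].
  set (F := fun h => g (x0 + h)).
  assert (HF : strictly_monotone_on F (fun h => 0 <= h <= a * d ^ M)).
  { eapply (strictly_monotone_on_comp g (fun h => x0 + h)); [| | exact Hmon].
    - intros h Hh. lra.
    - left. intros. lra. }
  assert (HlimF : is_lim_seq (fun m => (F (a * d ^ m) - F 0) / (a * d ^ m)) L).
  { eapply is_lim_seq_ext; [| exact Hlim]. intros n. symmetry. unfold F.
    rewrite Rplus_0_r. replace (x0 + a * d ^ n - x0) with (a * d ^ n) by ring.
    reflexivity. }
  assert (HdM : 0 < d ^ M) by (apply pow_lt; lra).
  pose proof (difference_quotient_limit_at_right_0 F a d (a * d ^ M) L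
    Hpos Hd ltac:(nra) HF HL HlimF) as HFlim.
  eapply filterlim_ext;
    [| eapply filterlim_comp; [apply filterlim_shift_at_right | exact HFlim]].
  intros x. simpl. unfold F. rewrite Rplus_0_r.
  replace (x0 + (x - x0)) with x by ring. reflexivity.
Qed.

Theorem lemma3 (g : R -> R) (x0 d a : R) (L : Rbar) :
  0 <= x0 <= 1 ->
  0 < d < 1 ->
  a <> 0 ->
  (exists N : nat, forall m : nat, (N <= m)%nat -> 0 <= x0 + a * d ^ m <= 1) ->
  (L = Finite 0 \/ L = p_infty \/ L = m_infty) ->
  is_lim_seq (fun m : nat => (g (x0 + a * d ^ m) - g x0) / ((x0 + a * d ^ m) - x0)) L ->
  (a < 0 ->
     (exists delta, 0 < delta /\
        strictly_monotone_on g (fun x => 0 <= x <= 1 /\ x0 - delta < x <= x0)) ->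
     has_left_derivative g x0 L) /\
  (0 < a ->
     (exists delta, 0 < delta /\
        strictly_monotone_on g (fun x => 0 <= x <= 1 /\ x0 <= x < x0 + delta)) ->
     has_right_derivative g x0 L).
Proof.
  intros Hx0 Hd _ Hseq HL Hlim. split.
  - intros Hneg Hmon.
    apply (has_left_derivative_of_geometric g x0 d a L (proj2 Hx0) Hd Hneg);
      [| exact HL | exact Hlim | exact Hmon].
    exact (filter_imp (F := eventually) _ _ (fun m Hm => proj1 Hm) Hseq).
  - intros Hpos Hmon.
    apply (has_right_derivative_of_geometric g x0 d a L (proj1 Hx0) Hd Hpos);
      [| exact HL | exact Hlim | exact Hmon].
    exact (filter_imp (F := eventually) _ _ (fun m Hm => proj2 Hm) Hseq).
Qed.
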